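(* Let $\mathbb{A}$ be a set of symbols and let $A=a_1a_2\dots a_m$ be a rainbow sequence with $a_i\in\mathbb{A}$ for all $i=1,\dots,m$. Let $r\ge 0$ and $1\le n_1<n_2<\dots<n_r<m$ be integers, and let $B^0,B^1,\dots,B^{r+1}$ be single symbols (not necessarily distinct from each other) with $B^i\notin\mathbb{A}$ for all $i$. Then the sequence $$S=B^0\,A_{1,n_1}\,B^1\,A_{n_1+1,n_2}\,\dots\,B^r\,A_{n_r+1,m}\,B^{r+1}$$ is nonrepetitive.
   Context: A finite sequence $R=r_1r_2\dots r_{2n}$ ($n\ge1$) is a repetition if $r_i=r_{n+i}$ for all $i=1,\dots,n$. A sequence is repetitive if some block of consecutive terms of it is a repetition, and nonrepetitive otherwise. A sequence of length $k$ consisting of $k$ pairwise different symbols is called rainbow. For a sequence $A=a_1\dots a_m$ and $1\le k\le l\le m$, $A_{k,l}$ denotes the block $a_ka_{k+1}\dots a_l$. *)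

From mathcomp Require Import all_boot.
Set Implicit Arguments. Unset Strict Implicit. Unset Printing Implicit Defensive.

(* A finite sequence R is a repetition if |R| = 2n, n >= 1, and r_i = r_{n+i}
   for all i = 1..n (here 0-indexed via onth). *)
Definition repetition (T : eqType) (R : seq T) : Prop :=
  exists n, 0 < n /\ size R = 2 * n /\
    forall i, i < n -> onth R i = onth R (n + i).

Definition repetitive (T : eqType) (S : seq T) : Prop :=
  exists u w v : seq T, S = u ++ w ++ v /\ repetition w.

Definition nonrepetitive (T : eqType) (S : seq T) : Prop := ~ repetitive S.

Definition rainbow (T : eqType) (S : seq T) : bool := uniq S.

(* A_{k,l} = a_k ... a_l (1-indexed, k <= l) *)
Definition block (T : Type) (A : seq T) (k l : nat) : seq T :=
  take (l - k + 1) (drop k.-1 A).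

Definition bound (r m : nat) (n : nat -> nat) (i : nat) : nat :=
  if i == 0 then 0 else if i == r.+1 then m else n i.

(* S = B^0 A_{1,n_1} B^1 A_{n_1+1,n_2} ... B^r A_{n_r+1,m} B^{r+1} *)
Definition interleave (T : Type) (A : seq T) (r : nat) (n : nat -> nat)
    (B : nat -> T) : seq T :=
  B 0 :: flatten [seq block A (bound r (size A) n i).+1 (bound r (size A) n i.+1)
                        ++ [:: B i.+1] | i <- iota 0 r.+1].

From mathcomp Require Import all_boot.
From mathcomp Require Import zify.

Set Implicit Arguments.
Unset Strict Implicit.
Unset Printing Implicit Defensive.

(* A repetition w = u u contains the first letter of u twice.  So if each
   letter satisfying [a] occurs at most once in S and no two letters failing
   [a] are adjacent, the first letter of u fails [a]; then the second letter
   of w satisfies [a], and it lies in u too unless |u| = 1, in which case it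
   equals the first one.  The corollary is the case [a] = 𝔸: the separators
   B^i are isolated because every block A_{n_i+1, n_{i+1}} is nonempty. *)

Section Criterion.
Variables (T : eqType) (a : pred T).

Lemma uniq_filter_nth_neq (w : seq T) x0 i j :
  uniq (filter a w) -> i < j < size w -> a (nth x0 w i) ->
  nth x0 w i != nth x0 w j.
Proof.
move=> + /andP[lt_ij lt_jw] ai.
rewrite -[w in filter _ w](cat_take_drop j) filter_cat cat_uniq.
case/and3P=> _ disj _; apply: contraNneq disj => eq_ij.
apply/hasP; exists (nth x0 w j).
  by rewrite mem_filter -eq_ij ai (drop_nth x0 lt_jw) eq_ij mem_head.
rewrite /= mem_filter -eq_ij ai -(nth_take x0 lt_ij) mem_nth // size_take_min.
lia.
Qed.

Lemma uniq_filter_nonrepetitive (S : seq T) :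
  uniq (filter a S) -> sorted [rel x y | a x || a y] S -> nonrepetitive S.
Proof.
move=> uniqS sortS [u [w [v [defS [k [k_gt0 [size_w per_w]]]]]]].
have {}uniqS : uniq (filter a w).
  by move: uniqS; rewrite defS !filter_cat !cat_uniq => /and3P[_ _ /andP[]].
have {sortS} sort_w : sorted [rel x y | a x || a y] w.
  by move: sortS; rewrite defS => /cat_sorted2[_ /cat_sorted2[]].
have per_nth x0 i : i < k -> nth x0 w i = nth x0 w (k + i).
  by move/per_w; rewrite -!odflt_onth => ->.
clear defS per_w; case: w => [|x [|y w]] in size_w uniqS sort_w per_nth *;
  try by move: size_w => /=; lia.
have first_half_notin i : i < k -> ~~ a (nth x [:: x, y & w] i).
  move=> lt_ik; apply/negP=> ai.
  have lt_i_ki : i < k + i < size [:: x, y & w] by rewrite size_w; lia.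
  by case/negP: (uniq_filter_nth_neq uniqS lt_i_ki ai); rewrite -per_nth.
case/andP: sort_w => /orP[ax|ay] _; first by case/negP: (first_half_notin 0 k_gt0).
have [k1|k_gt1] := eqVneq k 1.
  move: (per_nth x 0 k_gt0) (first_half_notin 0 k_gt0).
  by rewrite k1 /= => ->; rewrite ay.
have lt_1k : 1 < k by lia.
by case/negP: (first_half_notin 1 lt_1k).
Qed.

End Criterion.

Section Slices.
Variable T : Type.
Implicit Type s : seq T.

Definition slice s x y := take (y - x) (drop x s).

Lemma cat_slice s x y z : x <= y <= z -> slice s x y ++ slice s y z = slice s x z.
Proof.
case/andP=> le_xy le_yz; rewrite /slice.
have -> : z - x = (y - x) + (z - y) by lia.
by rewrite takeD drop_drop subnK.
Qed.

Lemma flatten_slices s (b : nat -> nat) j :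
  {in [pred i | i <= j] &, {homo b : x y / x <= y}} ->
  flatten [seq slice s (b i) (b i.+1) | i <- iota 0 j] = slice s (b 0) (b j).
Proof.
elim: j => [|j IHj] mono_b; first by rewrite /slice subnn take0.
rewrite -addn1 iotaD map_cat flatten_cat IHj => [|x y x_le y_le]; last first.
  by apply: mono_b; rewrite inE leqW.
by rewrite /= cats0 addn1 cat_slice // !mono_b ?inE ?leqnSn.
Qed.

Lemma size_slice s x y : y <= size s -> size (slice s x y) = y - x.
Proof. by move=> le_ys; rewrite size_takel // size_drop leq_sub2r. Qed.

Lemma block_slice s x y : x < y -> block s x.+1 y = slice s x y.
Proof. by move=> lt_xy; rewrite /block /slice addn1 subnSK. Qed.

End Slices.

Section Interleaving.
Variables (T : eqType) (a : pred T) (I : eqType) (C : I -> seq T) (B : I -> T).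

Lemma filter_interleaving x s :
  ~~ a x -> {in s, forall i, all a (C i) && ~~ a (B i)} ->
  filter a (x :: flatten [seq C i ++ [:: B i] | i <- s]) = flatten (map C s).
Proof.
move=> /negbTE /= -> {x}; elim: s => //= i s IHs sepCB.
have /andP[/all_filterP aC /negbTE aB] := sepCB i (mem_head i s).
rewrite !filter_cat aC /= aB cats0 IHs // => j s_j.
by apply: sepCB; rewrite inE s_j orbT.
Qed.

Lemma sorted_interleaving x s :
  {in s, forall i, (C i != [::]) && all a (C i)} ->
  sorted [rel y z | a y || a z] (x :: flatten [seq C i ++ [:: B i] | i <- s]).
Proof.
elim: s x => //= i s IHs x sepC.
rewrite -catA cat_path /= IHs ?andbT => [|j s_j]; last first.
  by apply: sepC; rewrite inE s_j orbT.
have /andP[] := sepC i (mem_head i s); case: (C i) => // c cs _ /allP a_ccs.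
rewrite /= (a_ccs c) ?mem_head // (a_ccs (last c cs)) ?mem_last // orbT andbT.
apply/(pathP c) => k lt_k; rewrite /= (a_ccs (nth c cs k)) ?orbT //.
by rewrite inE mem_nth ?orbT.
Qed.

End Interleaving.

Section Boundaries.
Variables (r m : nat) (n : nat -> nat).
Hypotheses (m_gt0 : 0 < m) (n_incr : forall i, 1 <= i < r -> n i < n i.+1)
  (n_range : 0 < r -> 1 <= n 1 /\ n r < m).

Lemma bound_ltS i : i <= r -> bound r m n i < bound r m n i.+1.
Proof.
move=> le_ir; have [r0|r_gt0] := posnP r.
  by move: le_ir; rewrite r0 leqn0 => /eqP->.
have [n1_ge1 nr_lt_m] := n_range r_gt0.
rewrite /bound eqSS (ltn_eqF (le_ir : i < r.+1)) /=.
case: eqVneq => [->|i_ne0]; case: eqVneq => [eq_ir|ne_ir] //=.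
  by rewrite eq_ir.
by apply: n_incr; rewrite lt0n i_ne0 ltn_neqAle ne_ir.
Qed.

Let bound_dom := [pred i | i <= r.+1].

Let bound_dom_convex :
  {in bound_dom &, forall i j k, i < k < j -> k \in bound_dom}.
Proof. by move=> i j _; rewrite !inE => le_j k /andP[_ /ltnW/leq_trans]; apply. Qed.

Let bound_step :
  {in bound_dom, forall i, i.+1 \in bound_dom -> bound r m n i < bound r m n i.+1}.
Proof. by move=> i _; rewrite inE ltnS => /bound_ltS. Qed.

Lemma bound_homo_leq :
  {in [pred i | i <= r.+1] &, {homo bound r m n : i j / i <= j}}.
Proof.
apply: homo_leq_in leqnn leq_trans bound_dom_convex _ => i Di Di1.
by rewrite ltnW ?bound_step.
Qed.

End Boundaries.

Theorem corollary2 (T : eqType) (symA : pred T) (A : seq T)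
    (r : nat) (n : nat -> nat) (B : nat -> T) :
  0 < size A ->
  rainbow A ->
  (forall x, x \in A -> symA x) ->
  (forall i, 1 <= i < r -> n i < n i.+1) ->
  (0 < r -> 1 <= n 1 /\ n r < size A) ->
  (forall i, i <= r.+1 -> ~~ symA (B i)) ->
  nonrepetitive (interleave A r n B).
Proof.
move=> A_gt0 uniqA symA_A n_incr n_range symA_B.
set b := bound r (size A) n; pose C i := slice A (b i) (b i.+1).
have b_ltS i : i <= r -> b i < b i.+1 by apply: bound_ltS.
have b_mono := bound_homo_leq A_gt0 n_incr n_range.
have b_last : b r.+1 = size A by rewrite /b /bound /= eqxx.
have b_le_size i : i <= r -> b i.+1 <= size A.
  by move=> le_ir; rewrite -b_last b_mono ?inE ?ltnS //.
have symA_C i : all symA (C i).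
  by apply/allP => x; rewrite /C /slice => /mem_take/mem_drop; apply: symA_A.
have -> : interleave A r n B =
    B 0 :: flatten [seq C i ++ [:: B i.+1] | i <- iota 0 r.+1].
  congr cons; congr flatten; apply/eq_in_map => i.
  by rewrite mem_iota => /andP[_ le_ir]; rewrite block_slice ?b_ltS.
apply: (uniq_filter_nonrepetitive (a := symA)).
  rewrite (filter_interleaving (C := C) (B := fun i => B i.+1)) ?symA_B //.
    rewrite /C flatten_slices // b_last /slice /b /bound /= drop0 subn0 take_size;
    exact: uniqA.
  by move=> i; rewrite mem_iota symA_C => /andP[_ lt_ir]; apply: symA_B.
apply: sorted_interleaving => i; rewrite mem_iota symA_C andbT => le_ir.
by rewrite -size_eq0 size_slice ?b_le_size // subn_eq0 -ltnNge b_ltS.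
Qed.
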